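(* Let $H$, $\sigma(H)$, $\Sigma$, $\mathcal D$ and $\rho$ be as below. Then (a) for each $d\in\mathcal D$ there is a unique arrow $\alpha_d\in a(H)$ with $s(\alpha_d)=d$, and $t(\alpha_d)=\rho(d)$; (b) if $d\in\mathcal D$ and $\beta\in a(H)$ satisfies $s(\beta)=\rho(d)$, then $\beta\alpha_d\in\langle\sigma(H)\rangle$.
   Context: $k$ is a field. For a finite quiver $H$ with vertex set $v(H)$ and arrow set $a(H)$, $s(p),t(p)$ denote start and terminal vertices of a path $p$, $e_x$ the trivial path at $x$, and $kH$ the path algebra, where $\beta\alpha$ denotes the path ''first $\alpha$, then $\beta$''. Standing setting: $H$ is a finite quiver and $\sigma(H)\subset kH$ a set of relations such that $\langle a(H)\rangle^m\subseteq\langle\sigma(H)\rangle\subseteq\langle a(H)\rangle^2$ for some $m\ge1$ (where $\langle X\rangle$ is the two-sided ideal generated by $X$); $\Sigma=kH/\langle\sigma(H)\rangle$ is finite-dimensional and satisfies condition (F): the radical of each indecomposable finitely generated projective left $\Sigma$-module is projective or simple. For $z\in v(H)$, $\hat e_z$ is the image of $e_z$, $P_z=\Sigma\hat e_z$ and $S_z$ the associated simple module. Set $\mathcal D=\{d\in v(H): \ell(P_d)=2$ and $\operatorname{Soc}P_d$ is not projective$\}$ and define $\rho:\mathcal D\to v(H)$ by $\rho(d)=y$ where $S_y\cong\operatorname{Soc}P_d$. *)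

From HB Require Import structures.
From mathcomp Require Import all_boot all_order all_algebra.
From Stdlib Require Import ClassicalEpsilon.
Set Implicit Arguments. Unset Strict Implicit. Unset Printing Implicit Defensive.
Import GRing.Theory.
Local Open Scope ring_scope.

(* A path is a pair (x, [:: a1; ...; an]) with s a1 = x and            *)
(* t a_i = s a_(i+1): "first a1, then a2, ...".  (x, [::]) is e_x.     *)
Section Quiver.
Variables (V E : finType) (s t : E -> V).

Fixpoint qchain (v : V) (l : seq E) : bool :=
  if l is a :: l' then (s a == v) && qchain (t a) l' else true.

Definition qvalid (p : V * seq E) : bool := qchain p.1 p.2.

Definition qpath := {p : V * seq E | qvalid p}.

Definition qstart (p : qpath) : V := (val p).1.
Definition qterm (p : qpath) : V := last (val p).1 (map t (val p).2).

Lemma qvalid_triv (x : V) : qvalid (x, [::]).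
Proof. by []. Qed.

Lemma qvalid_arrow (a : E) : qvalid (s a, [:: a]).
Proof. by rewrite /qvalid /= eqxx. Qed.

Definition etriv (x : V) : qpath := exist _ (x, [::]) (qvalid_triv x).
Definition arrowp (a : E) : qpath := exist _ (s a, [:: a]) (qvalid_arrow a).

(* kH: A is the path algebra of H over k, i.e. a k-algebra with k-basis   *)
(* (b p)_p indexed by the paths, multiplication given by concatenation:   *)
(* b q * b p = b (first p, then q) if t(p) = s(q), and 0 otherwise.        *)
Definition is_path_algebra (k : fieldType) (A : algType k) (b : qpath -> A) :=
  [/\
      forall (ps : seq qpath) (c : qpath -> k), uniq ps ->
        \sum_(p <- ps) c p *: b p = 0 -> forall p, p \in ps -> c p = 0,
      forall x : A, exists (ps : seq qpath) (c : qpath -> k),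
        x = \sum_(p <- ps) c p *: b p,
      forall p q r : qpath, qterm p = qstart q ->
        val r = ((val p).1, (val p).2 ++ (val q).2) -> b q * b p = b r
    &
      forall p q : qpath, qterm p <> qstart q -> b q * b p = 0].

End Quiver.

Section Ideals.
Variable A : pzRingType.

Definition is_ideal (I : A -> Prop) :=
  [/\ I 0, (forall x y, I x -> I y -> I (x + y)),
      (forall a x, I x -> I (a * x)) & (forall a x, I x -> I (x * a))].

Definition gen_ideal (X : A -> Prop) (y : A) : Prop :=
  forall I : A -> Prop, is_ideal I -> (forall x, X x -> I x) -> I y.

Fixpoint ideal_pow (I : A -> Prop) (n : nat) : A -> Prop :=
  match n with
  | 0 => fun _ => True
  | n'.+1 => gen_ideal (fun z => exists x y, [/\ ideal_pow I n' x, I y & z = x * y])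
  end.

End Ideals.

(* Module theory.  A (sub)module is represented as a predicate N on an  *)
(* ambient left R-module M (a whole module M is [fun _ => True]).       *)
(* Homomorphisms out of N are functions M -> M' that are R-linear on N. *)
Section Modules.
Variable R : pzRingType.

Definition lin (X Y : lmodType R) (f : X -> Y) :=
  forall (a : R) (x y : X), f (a *: x + y) = a *: f x + f y.

Section Amb.
Variable M : lmodType R.

Definition submodN (N : M -> Prop) :=
  N 0 /\ forall (a : R) (u v : M), N u -> N v -> N (a *: u + v).

Definition linear_on (Y : lmodType R) (N : M -> Prop) (f : M -> Y) :=
  forall (a : R) (u v : M), N u -> N v -> f (a *: u + v) = a *: f u + f v.

Definition zeroN (N : M -> Prop) := forall u, N u -> u = 0.

Definition projectiveN (N : M -> Prop) :=
  submodN N /\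
  forall (X Y : lmodType R) (g : X -> Y) (f : M -> Y),
    lin g -> (forall y, exists x, g x = y) -> linear_on N f ->
    exists h : M -> X, linear_on N h /\ forall u, N u -> g (h u) = f u.

Definition fingenN (N : M -> Prop) :=
  submodN N /\ exists gs : seq M, (forall x, x \in gs -> N x) /\
    forall u, N u -> exists c : M -> R, u = \sum_(x <- gs) c x *: x.

Definition indecomposableN (N : M -> Prop) :=
  [/\ submodN N, (exists u, N u /\ u <> 0) &
   forall N1 N2 : M -> Prop, submodN N1 -> submodN N2 ->
     (forall u, N1 u -> N u) -> (forall u, N2 u -> N u) ->
     (forall u, N1 u -> N2 u -> u = 0) ->
     (forall u, N u -> exists u1 u2, [/\ N1 u1, N2 u2 & u = u1 + u2]) ->
     zeroN N1 \/ zeroN N2].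

Definition simpleN (N : M -> Prop) :=
  [/\ submodN N, (exists u, N u /\ u <> 0) &
   forall L : M -> Prop, submodN L -> (forall u, L u -> N u) ->
     zeroN L \/ (forall u, N u -> L u)].

Definition coverN (L N : M -> Prop) :=
  [/\ submodN L, submodN N, (forall u, L u -> N u),
      (exists u, N u /\ ~ L u) &
   forall K : M -> Prop, submodN K -> (forall u, L u -> K u) ->
     (forall u, K u -> N u) -> (forall u, K u -> L u) \/ (forall u, N u -> K u)].

Definition radN (N : M -> Prop) (u : M) : Prop :=
  N u /\ forall L, coverN L N -> L u.

Definition socN (N : M -> Prop) (u : M) : Prop :=
  exists us : seq M, u = \sum_(x <- us) x /\
    forall x, x \in us -> exists L : M -> Prop,
      [/\ simpleN L, (forall v, L v -> N v) & L x].

Definition lengthN (N : M -> Prop) (n : nat) :=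
  exists Ms : nat -> M -> Prop,
    [/\ (forall u, Ms 0%N u <-> u = 0), (forall u, Ms n u <-> N u) &
        forall i, (i < n)%N -> coverN (Ms i) (Ms i.+1)].

Definition iso_quotN (M' : lmodType R) (N L : M -> Prop) (N' : M' -> Prop) :=
  exists f : M -> M',
    [/\ linear_on N f, (forall u, N u -> N' (f u)),
        (forall v, N' v -> exists u, N u /\ f u = v) &
        forall u, N u -> (f u = 0 <-> L u)].

End Amb.

Definition condF :=
  forall M : lmodType R,
    indecomposableN (fun _ : M => True) -> fingenN (fun _ : M => True) ->
    projectiveN (fun _ : M => True) ->
    projectiveN (radN (fun _ : M => True)) \/ simpleN (radN (fun _ : M => True)).

End Modules.

(* The modules P_z = Sigma e_z (left ideals of the regular module),    *)
(* the set D and the map rho.  e z is the image of the trivial path.  *)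
Section Sigma.
Variables (V : finType) (S : nzRingType) (e : V -> S).

Definition Pmod (z : V) : S^o -> Prop := fun x => exists a : S, (x : S) = a * e z.

Definition top_iso_soc (y d : V) :=
  iso_quotN (Pmod y) (radN (Pmod y)) (socN (Pmod d)).

Definition inD (d : V) := lengthN (Pmod d) 2 /\ ~ projectiveN (socN (Pmod d)).

Definition rho (d : V) : V := epsilon (inhabits d) (fun y => top_iso_soc y d).

End Sigma.

From HB Require Import structures.
From mathcomp Require Import all_boot all_order all_algebra.
From Stdlib Require Import ClassicalEpsilon Classical.
Set Implicit Arguments. Unset Strict Implicit. Unset Printing Implicit Defensive.
Import GRing.Theory.
Local Open Scope ring_scope.

(* Since <sigma(H)> lies in J^2 (J the arrow ideal), the kernel of kH -> Sigma is
   spanned by paths of length at least 2, so modulo it trivial paths and arrows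
   remain independent of longer paths.  As P_d has length 2, it contains no chain
   0 < N1 < N2 < P_d.  Hence d is the source of an arrow alpha (otherwise
   P_d = k e_d would be simple), of only one (otherwise
   0 < Sigma alpha < Sigma alpha + Sigma alpha' < P_d), and beta alpha vanishes
   in Sigma (otherwise 0 < Sigma beta alpha < Sigma alpha < P_d).  Then
   P_d = k e_d + k alpha, its socle is Sigma alpha, and u |-> u alpha maps
   P_(t alpha) onto it with kernel the annihilator of alpha.  This kernel is the
   radical: it is maximal, and a maximal submodule not containing it would contain
   some e_(t alpha) - r with r nilpotent (r lies in the image of J), hence
   e_(t alpha) itself.  So rho(d) = t(alpha). *)

Section RingFacts.
Variable R : pzRingType.

Lemma gen_ideal_in (X : R -> Prop) y : X y -> gen_ideal X y.
Proof. by move=> Xy I _; apply. Qed.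

Lemma gen_idealP (X : R -> Prop) : is_ideal (gen_ideal X).
Proof.
split=> [I []//|x y Xx Xy|a x Xx|a x Xx] I idI XI; case: (idI) => _ ID IL IR.
- by apply: ID; [apply: Xx|apply: Xy].
- by apply: IL; apply: Xx.
- by apply: IR; apply: Xx.
Qed.

Lemma ideal_pow_exp (I : R -> Prop) r n : I r -> ideal_pow I n (r ^+ n).
Proof.
move=> Ir; elim: n => [|n IH] //=.
by apply: gen_ideal_in; exists (r ^+ n), r; split; rewrite ?exprSr.
Qed.

Lemma sum_expr_mul_subr (e r : R) n : r * e = r ->
  (\sum_(i < n.+1) r ^+ i) * (e - r) = e - r ^+ n.+1.
Proof.
move=> re; elim: n => [|n IH]; first by rewrite big_ord1 expr0 mul1r expr1.
have rne : r ^+ n.+1 * e = r ^+ n.+1 by rewrite exprSr -mulrA re.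
by rewrite big_ord_recr /= mulrDl IH mulrBr rne -exprSr addrA subrK.
Qed.

End RingFacts.

Section PathAlgebra.
Variables (k : fieldType) (V E : finType) (s t : E -> V) (A : algType k).
Variable b : qpath s t -> A.
Hypothesis pathA : is_path_algebra b.

Local Notation path := (qpath s t).
Local Notation J := (gen_ideal (fun y => exists a : E, y = b (arrowp s t a))).

Lemma qchain_cat v l1 l2 :
  qchain s t v (l1 ++ l2) = qchain s t v l1 && qchain s t (last v (map t l1)) l2.
Proof. by elim: l1 v => [|a l1 IH] v //=; rewrite IH andbA. Qed.

Lemma qcat_valid (p q : path) : qterm p = qstart q ->
  qvalid s t ((val p).1, (val p).2 ++ (val q).2).
Proof.
move=> pq; have := valP p; rewrite /qvalid /= qchain_cat => -> /=.
by rewrite /qterm in pq; rewrite pq; apply: (valP q).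
Qed.

Definition qcat (p q : path) (pq : qterm p = qstart q) : path :=
  exist (qvalid s t) _ (qcat_valid pq).

Lemma b_mul_qcat (p q : path) (pq : qterm p = qstart q) : b q * b p = b (qcat pq).
Proof. by case: pathA => _ _ bcat _; apply: bcat. Qed.

Lemma b_mul_eq0 (p q : path) : qterm p != qstart q -> b q * b p = 0.
Proof. by case: pathA => _ _ _ b0 /eqP; apply: b0. Qed.

Definition pspan (Q : path -> Prop) (x : A) :=
  exists l : seq (k * path), (forall z, z \in l -> Q z.2) /\ x = \sum_(z <- l) z.1 *: b z.2.

Section Span.
Variable Q : path -> Prop.

Lemma pspan0 : pspan Q 0.
Proof. by exists [::]; rewrite big_nil. Qed.

Lemma pspanD x y : pspan Q x -> pspan Q y -> pspan Q (x + y).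
Proof.
move=> [l1 [Q1 ->]] [l2 [Q2 ->]]; exists (l1 ++ l2); rewrite big_cat.
by split=> // z; rewrite mem_cat => /orP[/Q1|/Q2].
Qed.

Lemma pspanZ c x : pspan Q x -> pspan Q (c *: x).
Proof.
move=> [l [Ql ->]]; exists [seq (c * z.1, z.2) | z <- l]; split.
  by move=> z /mapP[z' /Ql + ->].
by rewrite big_map scaler_sumr; apply: eq_bigr => z _; rewrite scalerA.
Qed.

Lemma pspan_basis p : Q p -> pspan Q (b p).
Proof.
by move=> Qp; exists [:: (1, p)]; rewrite big_seq1 scale1r; split=> // z /[1!inE] /eqP->.
Qed.

Lemma pspan_sum (I : eqType) (r : seq I) (F : I -> A) :
  (forall i, i \in r -> pspan Q (F i)) -> pspan Q (\sum_(i <- r) F i).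
Proof.
elim: r => [|i r IH] QF; first by rewrite big_nil; apply: pspan0.
by rewrite big_cons; apply: pspanD; [apply: QF; rewrite mem_head|
  apply: IH => j rj; apply: QF; rewrite inE rj orbT].
Qed.

Lemma pspan_ind (G : A -> Prop) : G 0 -> (forall x y, G x -> G y -> G (x + y)) ->
  (forall c p, Q p -> G (c *: b p)) -> forall x, pspan Q x -> G x.
Proof.
move=> G0 GD Gb x [l [Ql ->]]; elim: l Ql => [|z l IH] Ql; first by rewrite big_nil.
by rewrite big_cons; apply: GD; [apply: Gb; apply: Ql; rewrite mem_head|
  apply: IH => w lw; apply: Ql; rewrite inE lw orbT].
Qed.

Lemma pspan_regroup (l : seq (k * path)) : exists (ps : seq path) (c : path -> k),
  [/\ uniq ps, {subset ps <= [seq z.2 | z <- l]} &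
      \sum_(z <- l) z.1 *: b z.2 = \sum_(q <- ps) c q *: b q].
Proof.
elim: l => [|z l [ps [c [ups psl lps]]]]; first by exists [::], (fun=> 0); rewrite !big_nil.
have psl' : {subset ps <= [seq z.2 | z <- z :: l]} by move=> q /psl; rewrite inE orbC => ->.
rewrite big_cons lps; have [zps|zNps] := boolP (z.2 \in ps).
  exists ps, (fun q => if q == z.2 then c q + z.1 else c q); split=> //.
  rewrite (bigD1_seq _ zps ups) (bigD1_seq _ zps ups) /= eqxx scalerDl.
  rewrite addrA [z.1 *: _ + _]addrC; congr (_ + _).
  by apply: eq_bigr => q /negbTE ->.
exists (z.2 :: ps), (fun q => if q == z.2 then z.1 else c q); split.
- by rewrite /= zNps ups.
- by move=> q /[1!inE] /orP[/eqP->|/psl']; rewrite ?mem_head.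
rewrite big_cons eqxx; congr (_ + _); apply: eq_big_seq => q psq.
by case: eqP => // qz; rewrite -qz psq in zNps.
Qed.

Lemma pspan_basisP p : pspan Q (b p) -> Q p.
Proof.
move=> [l [Ql]]; have [ps [c [ups psl ->]]] := pspan_regroup l => bp.
apply: NNPP => nQp; have pNps : p \notin ps.
  by apply/negP => /psl/mapP[z /Ql Qz pz]; rewrite -pz in Qz.
case: pathA => indep _ _ _.
have := indep (p :: ps) (fun q => if q == p then 1 else - c q).
rewrite /= pNps ups big_cons eqxx scale1r => /(_ isT).
rewrite (eq_big_seq (fun q => - (c q *: b q))); last first.
  by move=> q psq; case: eqP => [qp|_]; [rewrite -qp psq in pNps|rewrite scaleNr].
rewrite sumrN -bp subrr => /(_ erefl p (mem_head _ _)).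
by rewrite eqxx => /eqP; rewrite oner_eq0.
Qed.

End Span.

Lemma pspan_sub (Q1 Q2 : path -> Prop) x :
  (forall p, Q1 p -> Q2 p) -> pspan Q1 x -> pspan Q2 x.
Proof. by move=> Q12 [l [Ql ->]]; exists l; split=> // z /Ql /Q12. Qed.

Lemma pspanT x : pspan (fun=> True) x.
Proof.
case: pathA => _ spanning _ _; have [ps [c ->]] := spanning x.
by exists [seq (c p, p) | p <- ps]; rewrite big_map.
Qed.

Lemma pspan_mul (Q1 Q2 Q3 : path -> Prop) x y :
  (forall p q (pq : qterm p = qstart q), Q1 p -> Q2 q -> Q3 (qcat pq)) ->
  pspan Q1 x -> pspan Q2 y -> pspan Q3 (y * x).
Proof.
move=> Q123 [l1 [Ql1 ->]] [l2 [Ql2 ->]].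
rewrite mulr_suml; apply: pspan_sum => z2 l2z; rewrite mulr_sumr; apply: pspan_sum => z1 l1z.
rewrite -scalerAl -scalerAr; apply: pspanZ; apply: pspanZ.
have [pq|pq] := eqVneq (qterm z1.2) (qstart z2.2); last by rewrite b_mul_eq0 //; apply: pspan0.
by rewrite b_mul_qcat; apply: pspan_basis; apply: Q123; [apply: Ql1|apply: Ql2].
Qed.

Lemma pspan_ideal (Q : path -> Prop) :
  (forall p q (pq : qterm p = qstart q), Q p -> Q (qcat pq)) ->
  (forall p q (pq : qterm p = qstart q), Q q -> Q (qcat pq)) ->
  is_ideal (pspan Q).
Proof.
move=> Qr Ql; split; [exact: pspan0|exact: pspanD|..] => a x Qx.
  by apply: (pspan_mul (Q1 := Q) (Q2 := fun=> True)) (pspanT _) => // p q pq /Qr.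
by apply: (pspan_mul (Q1 := fun=> True) (Q2 := Q)) (pspanT _) Qx => // p q pq _ /Ql.
Qed.

Definition long_path n (p : path) := (n <= size (val p).2)%N.

Lemma long_path_ideal n : is_ideal (pspan (long_path n)).
Proof.
by apply: pspan_ideal => p q pq; rewrite /long_path size_cat => /leq_trans; apply;
  rewrite ?leq_addr ?leq_addl.
Qed.

Lemma arrow_ideal_long1 x : J x -> pspan (long_path 1) x.
Proof. by apply; [apply: long_path_ideal|move=> _ [a ->]; apply: pspan_basis]. Qed.

Lemma arrow_ideal_pow2_long2 x : ideal_pow J 2 x -> pspan (long_path 2) x.
Proof.
apply; first exact: long_path_ideal.
move=> _ [u [v [Ju Jv ->]]]; apply: (pspan_mul (Q1 := long_path 1) (Q2 := long_path 1)).
- by move=> p q pq; rewrite /long_path size_cat; apply: (@leq_add 1 1).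
- exact: arrow_ideal_long1.
- apply: Ju; first exact: long_path_ideal.
  by move=> _ [y [z [_ Jz ->]]]; case: (long_path_ideal 1) => _ _ IL _; apply/IL/arrow_ideal_long1.
Qed.

Section Cons.
Variables (p : path) (a : E) (l : seq E).
Hypothesis pal : (val p).2 = a :: l.

Lemma qtail_valid : qvalid s t (t a, l).
Proof. by have := valP p; rewrite /qvalid pal => /andP[]. Qed.

Lemma qhead_start : s a = (val p).1.
Proof. by have := valP p; rewrite /qvalid pal => /andP[/eqP]. Qed.

Lemma b_cons : b p = b (exist (qvalid s t) _ qtail_valid) * b (arrowp s t a).
Proof.
case: pathA => _ _ bcat _; symmetry; apply: bcat => //=.
by rewrite qhead_start -pal -surjective_pairing.
Qed.

End Cons.

Lemma arrow_ideal_pspan (Q : path -> Prop) x :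
  (forall p, Q p -> (val p).2 <> [::]) -> pspan Q x -> J x.
Proof.
move=> Qnil; have [J0 JD JL _] := gen_idealP (fun y => exists a : E, y = b (arrowp s t a)).
apply: pspan_ind => [//|//|c p /Qnil].
case pal: (val p).2 => [|a l] // _.
by rewrite -mulr_algl (b_cons pal); do 2 apply: (JL); apply: gen_ideal_in; exists a.
Qed.

Local Notation ep z := (b (etriv s t z)).
Local Notation ap a := (b (arrowp s t a)).

Lemma b_etriv_idem z : ep z * ep z = ep z.
Proof. by case: pathA => _ _ bcat _; apply: bcat. Qed.

Lemma b_arrow_etriv a : ap a * ep (s a) = ap a.
Proof. by case: pathA => _ _ bcat _; apply: bcat. Qed.

Lemma b_etriv_arrow a : ep (t a) * ap a = ap a.
Proof. by case: pathA => _ _ bcat _; apply: bcat. Qed.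

Lemma b_etriv_arrow_eq0 a z : z != t a -> ep z * ap a = 0.
Proof. by move=> zt; apply: b_mul_eq0; rewrite eq_sym. Qed.

Lemma b_arrow_loopN_eq0 a : s a != t a -> ap a * ap a = 0.
Proof. by move=> st; apply: b_mul_eq0; rewrite eq_sym. Qed.

End PathAlgebra.

Section SubmoduleFacts.
Variables (R : pzRingType) (M : lmodType R).
Implicit Types N L : M -> Prop.

Lemma submodN0 N : submodN N -> N 0.
Proof. by case. Qed.

Lemma submodND N u v : submodN N -> N u -> N v -> N (u + v).
Proof. by case=> _ NZD Nu Nv; rewrite -[u]scale1r; apply: NZD. Qed.

Lemma submodNZ N a u : submodN N -> N u -> N (a *: u).
Proof. by case=> N0 NZD Nu; rewrite -[_ *: _]addr0; apply: NZD. Qed.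

Lemma submodNB N u v : submodN N -> N u -> N v -> N (u - v).
Proof. by move=> sN Nu Nv; rewrite -scaleN1r; apply: submodND => //; apply: submodNZ. Qed.

Lemma submodNI N L : submodN N -> submodN L -> submodN (fun u => N u /\ L u).
Proof.
move=> [N0 NZD] [L0 LZD]; split=> // a u v [Nu Lu] [Nv Lv].
by split; [apply: NZD|apply: LZD].
Qed.

Definition addN N L (u : M) := exists n l, [/\ N n, L l & u = n + l].

Lemma submodN_add N L : submodN N -> submodN L -> submodN (addN N L).
Proof.
move=> sN sL; split; first by exists 0, 0; rewrite addr0; split=> //; apply: submodN0.
move=> a _ _ [n [l [Nn Ll ->]]] [n' [l' [Nn' Ll' ->]]].
exists (a *: n + n'), (a *: l + l'); split; [by case: sN => _; apply|by case: sL => _; apply|].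
by rewrite scalerDr addrACA.
Qed.

Lemma cover_addN L P N : coverN L P -> submodN N -> (forall u, N u -> P u) ->
  (forall u, N u -> L u) \/ (forall u, P u -> addN N L u).
Proof.
move=> [sL sP LP _ maxL] sN NP.
have LK u : L u -> addN N L u by exists 0, u; rewrite add0r; split=> //; apply: submodN0.
have KP u : addN N L u -> P u.
  by move=> [n [l [Nn Ll ->]]]; apply: submodND; [|apply: NP|apply: LP].
have [KL|PK] := maxL _ (submodN_add sN sL) LK KP; last by right.
by left=> u Nu; apply: KL; exists u, 0; rewrite addr0; split=> //; apply: submodN0.
Qed.

Lemma length2_no_chain3 P N1 N2 : lengthN P 2 -> submodN N1 -> submodN N2 ->
  (forall u, N1 u -> N2 u) -> (forall u, N2 u -> P u) ->
  (exists u, N1 u /\ u <> 0) -> (exists u, N2 u /\ ~ N1 u) -> (exists u, P u /\ ~ N2 u) ->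
  False.
Proof.
move=> [Ms [Ms0 Ms2 cov]] sN1 sN2 N12 N2P [u1 [N1u1 u1N0]] [u2 [N2u2 N1Nu2]] [u3 [Pu3 N2Nu3]].
have cov0 := cov 0%N isT; have cov1 := cov 1%N isT.
have [_ sL _ _ max0] := cov0; have [_ _ LP _ max1] := cov1.
have zero_in K : submodN K -> forall u, Ms 0%N u -> K u by move=> sK u /Ms0 ->; apply: submodN0.
have N2P' u : N2 u -> Ms 2%N u by move/N2P/Ms2.
have sN2L := submodNI sN2 sL.
have [N2L0|LN2] := max0 _ sN2L (zero_in _ sN2L) (fun u => @proj2 _ _).
- have [N1L|PN1L] := cover_addN cov1 sN1 (fun u => N2P' u \o N12 u).
    by apply/u1N0/Ms0/N2L0; split; [apply: N12|apply: N1L].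
  have [n [l [Nn Ll u2E]]] := PN1L u2 (N2P' _ N2u2).
  have N2l : N2 l.
    have -> : l = u2 - n by rewrite u2E [n + l]addrC addrK.
    by apply: submodNB => //; apply: N12.
  by apply: N1Nu2; have /Ms0 l0 := N2L0 l (conj N2l Ll); rewrite u2E l0 addr0.
- have N2L u : N2 u -> Ms 1%N u.
    have LN2' v : Ms 1%N v -> N2 v by case/LN2.
    case: (max1 N2 sN2 LN2' N2P') => [N2L|PN2]; first exact: N2L.
    by case: N2Nu3; apply/PN2/Ms2.
  have [N10|LN1] := max0 N1 sN1 (zero_in _ sN1) (fun u => N2L u \o N12 u).
    by apply/u1N0/Ms0/N10.
  by apply/N1Nu2/LN1/N2L.
Qed.

End SubmoduleFacts.

Section LeftIdeals.
Variable R : nzRingType.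

Definition cyclicN (w : R) (u : R^o) := exists x, u = x * w.

Definition cyclic2N (w1 w2 : R) (u : R^o) := exists x y, u = x * w1 + y * w2.

Lemma cyclicN_submod w : submodN (cyclicN w).
Proof.
split; first by exists 0; rewrite mul0r.
by move=> a _ _ [x ->] [y ->]; exists (a * x + y); rewrite mulrDl -mulrA.
Qed.

Lemma cyclic2N_submod w1 w2 : submodN (cyclic2N w1 w2).
Proof.
split; first by exists 0, 0; rewrite !mul0r addr0.
move=> a _ _ [x [y ->]] [x' [y' ->]]; exists (a * x + x'), (a * y + y').
by rewrite /GRing.scale /= mulrDr !mulrDl !mulrA addrACA.
Qed.


End LeftIdeals.

Section BoundQuotient.
Variables (k : fieldType) (V E : finType) (s t : E -> V) (A : algType k).
Variables (b : qpath s t -> A) (sigma : A -> Prop) (m : nat).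
Variables (Sig : nzRingType) (pi : {rmorphism A -> Sig}).

Local Notation path := (qpath s t).
Local Notation J := (gen_ideal (fun y => exists a : E, y = b (arrowp s t a))).
Local Notation ep z := (b (etriv s t z)).
Local Notation ap a := (b (arrowp s t a)).
Local Notation kact := (pi \o in_alg A).

Hypotheses (pathA : is_path_algebra b) (m_gt0 : (0 < m)%N).
Hypotheses (powJ_sigma : forall x, ideal_pow J m x -> gen_ideal sigma x)
  (sigma_powJ2 : forall x, gen_ideal sigma x -> ideal_pow J 2 x).
Hypotheses (pi_surj : forall y, exists x, pi x = y)
  (ker_pi : forall x, pi x = 0 <-> gen_ideal sigma x).

Definition ehat z := pi (ep z).

Definition nontriv_from z (p : path) := (val p).1 = z /\ (val p).2 <> [::].

Definition starts_with a (p : path) := exists l, (val p).2 = a :: l.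

Lemma ker_pi_long2 x : pi x = 0 -> pspan b (long_path 2) x.
Proof. by move/ker_pi/sigma_powJ2; apply: arrow_ideal_pow2_long2. Qed.

Lemma pi_arrow_neq0 a : pi (ap a) <> 0.
Proof. by move/ker_pi_long2/(pspan_basisP pathA). Qed.

Lemma pi_scaler c x : pi (c *: x) = kact c * pi x.
Proof. by rewrite -mulr_algl rmorphM. Qed.

Lemma kact_comm c y : kact c * y = y * kact c.
Proof. by have [x <-] := pi_surj y; rewrite /= -!rmorphM mulr_algl mulr_algr. Qed.

Lemma kactK c y : c != 0 -> kact c^-1 * (kact c * y) = y.
Proof. by move=> c0; rewrite mulrA -rmorphM mulVf // rmorph1 mul1r. Qed.

Lemma kact_fix_eq1 c y : y <> 0 -> kact c * y = y -> c = 1.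
Proof.
move=> y0 cy; apply: NNPP => /eqP; rewrite -subr_eq0 => c1; apply: y0.
by rewrite -(kactK y c1) rmorphB mulrBl cy rmorph1 mul1r subrr mulr0.
Qed.

Lemma pi_pspan_eq0 (Q : path -> Prop) x :
  (forall p, Q p -> pi (b p) = 0) -> pspan b Q x -> pi x = 0.
Proof.
move=> Q0; apply: (pspan_ind (G := fun y => pi y = 0)); first by rewrite rmorph0.
  by move=> u v u0 v0; rewrite rmorphD u0 v0 addr0.
by move=> c p /Q0 p0; rewrite pi_scaler p0 mulr0.
Qed.

Lemma ehat_idem z : ehat z * ehat z = ehat z.
Proof. by rewrite -rmorphM b_etriv_idem. Qed.

Lemma pi_arrow_ehat a : pi (ap a) * ehat (s a) = pi (ap a).
Proof. by rewrite -rmorphM b_arrow_etriv. Qed.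

Lemma ehat_pi_arrow a : ehat (t a) * pi (ap a) = pi (ap a).
Proof. by rewrite -rmorphM b_etriv_arrow. Qed.

Lemma ehat_pi_arrow_eq0 a z : z != t a -> ehat z * pi (ap a) = 0.
Proof. by move=> zt; rewrite -rmorphM b_etriv_arrow_eq0 // rmorph0. Qed.

Lemma Pmod_ehat z : Pmod ehat z (ehat z).
Proof. by exists (ehat z); rewrite ehat_idem. Qed.

Lemma Pmod_submod z : submodN (Pmod ehat z).
Proof. exact: cyclicN_submod. Qed.

Lemma PmodP z u : Pmod ehat z u <-> u * ehat z = u.
Proof. by split=> [[a ->]|<-]; [rewrite -mulrA ehat_idem|exists u]. Qed.

Lemma Pmod_decomp z u : Pmod ehat z u ->
  exists c r, u = kact c * ehat z + pi r /\ pspan b (nontriv_from z) r.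
Proof.
move=> [y ->]; have [x <-] := pi_surj y; rewrite -rmorphM.
have : pspan b (fun p => (val p).1 = z) (x * ep z).
  apply: (pspan_mul pathA (Q1 := eq^~ (etriv s t z)) (Q2 := fun=> True)).
  - by move=> p q pq pz _; rewrite /= pz.
  - exact: pspan_basis.
  - exact: pspanT.
apply: (pspan_ind (G := fun y => exists c r,
  pi y = kact c * ehat z + pi r /\ pspan b (nontriv_from z) r)).
- by exists 0, 0; rewrite !rmorph0 mul0r addr0; split=> //; apply: pspan0.
- move=> y1 y2 [c1 [r1 [y1E R1]]] [c2 [r2 [y2E R2]]]; exists (c1 + c2), (r1 + r2).
  by rewrite !rmorphD y1E y2E mulrDl addrACA; split=> //; apply: pspanD.
move=> c p pz; case pl: (val p).2 => [|a l].
  have -> : p = etriv s t z by apply/val_inj; rewrite /= -pz -pl -surjective_pairing.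
  by exists c, 0; rewrite rmorph0 addr0 pi_scaler; split=> //; apply: pspan0.
exists 0, (c *: b p); rewrite rmorph0 mul0r add0r; split=> //.
by apply/pspanZ/pspan_basis; split; rewrite ?pl.
Qed.

Lemma pspan_starts_with a x : pspan b (starts_with a) (x * ap a).
Proof.
apply: (pspan_mul pathA (Q1 := eq^~ (arrowp s t a)) (Q2 := fun=> True)).
- by move=> p q pq pa _; exists (val q).2; rewrite /= pa.
- exact: pspan_basis.
- exact: pspanT.
Qed.

(* [e_d - (x a1 + y a2)] would be in the kernel, spanned by paths of length >= 2. *)
Lemma ehat_notin_cyclic2N d a1 a2 : ~ cyclic2N (pi (ap a1)) (pi (ap a2)) (ehat d).
Proof.
move=> [x' [y']]; have [x <-] := pi_surj x'; have [y <-] := pi_surj y'.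
rewrite -!rmorphM -rmorphD => /eqP; rewrite -subr_eq0 -rmorphB => /eqP/ker_pi_long2 ker2.
have long1 : pspan b (long_path 1) (x * ap a1 + y * ap a2).
  by apply: pspanD; apply: (pspan_sub (Q1 := starts_with _)) (pspan_starts_with _ _)
    => p [l pl]; rewrite /long_path pl.
suff: long_path 1 (etriv s t d) by []; apply: (pspan_basisP pathA (Q := long_path 1)).
rewrite -(subrK (x * ap a1 + y * ap a2) (ep d)); apply: pspanD => //.
by apply: pspan_sub ker2 => p; apply: ltnW.
Qed.

Lemma ehat_notin_cyclicN d a : ~ cyclicN (pi (ap a)) (ehat d).
Proof. by move=> [x ed]; apply: (@ehat_notin_cyclic2N d a a); exists x, 0; rewrite mul0r addr0. Qed.

Lemma pi_arrow_notin_cyclicN a y (Q : path -> Prop) :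
  (forall x, pspan b Q (x * y)) -> ~ Q (arrowp s t a) -> ~ cyclicN (pi y) (pi (ap a)).
Proof.
move=> Qy NQa [x']; have [x <-] := pi_surj x'.
rewrite -rmorphM => /eqP; rewrite -subr_eq0 -rmorphB => /eqP/ker_pi_long2 ker2.
suff : long_path 2 (arrowp s t a) \/ Q (arrowp s t a) by case.
apply: (pspan_basisP pathA (Q := fun p => long_path 2 p \/ Q p)).
rewrite -(subrK (x * y) (ap a)).
by apply: pspanD; [apply: pspan_sub ker2; left|apply: pspan_sub (Qy x); right].
Qed.

Lemma cyclicN_arrow_Pmod a u : cyclicN (pi (ap a)) u -> Pmod ehat (s a) u.
Proof. by move=> [x ->]; apply/PmodP; rewrite -mulrA pi_arrow_ehat. Qed.

Section LengthTwo.
Variable d : V.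
Hypothesis Dd : inD ehat d.

Lemma exists_arrow_from_D : exists a, s a = d.
Proof.
have [[Ms [Ms0 Ms2 cov]] _] := Dd; apply: NNPP => noarrow.
have [_ sL _ [u [Lu M0Nu]] _] := cov 0%N isT.
have [_ _ LP [v [Pv LNv]] _] := cov 1%N isT.
have [c [r [uE nr]]] := Pmod_decomp ((Ms2 u).1 (LP _ Lu)).
have r0 : pi r = 0.
  apply: (pi_pspan_eq0 (Q := nontriv_from d)) nr => p [pd].
  case pl: (val p).2 => [|a l] // _; case: noarrow; exists a.
  by rewrite -pd (qhead_start pl).
have c0 : c != 0.
  by apply/eqP => c0; apply/M0Nu/Ms0; rewrite uE r0 c0 rmorph0 mul0r addr0.
have Le : Ms 1%N (ehat d).
  have -> : ehat d = kact c^-1 * u by rewrite uE r0 addr0 kactK.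
  exact: submodNZ.
by apply: LNv; have [a ->] := (Ms2 v).1 Pv; apply: submodNZ.
Qed.

Lemma arrow_from_D_uniq a1 a2 : s a1 = d -> s a2 = d -> a1 = a2.
Proof.
move=> a1d a2d; apply: NNPP => a12.
have [lenP _] := Dd.
apply: (length2_no_chain3 lenP (cyclicN_submod (pi (ap a1)))
  (cyclic2N_submod (pi (ap a1)) (pi (ap a2)))).
- by move=> _ [x ->]; exists x, 0; rewrite mul0r addr0.
- move=> _ [x [y ->]]; rewrite -a1d; apply: (submodND (Pmod_submod _)).
    by apply: cyclicN_arrow_Pmod; exists x.
  by rewrite a1d -a2d; apply: cyclicN_arrow_Pmod; exists y.
- by exists (pi (ap a1)); split; [exists 1; rewrite mul1r|apply: pi_arrow_neq0].
- exists (pi (ap a2)); split; first by exists 0, 1; rewrite mul0r mul1r add0r.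
  apply: (pi_arrow_notin_cyclicN (pspan_starts_with a1)) => -[l /= [a21]].
  by case: a12.
- by exists (ehat d); split; [apply: Pmod_ehat|apply: ehat_notin_cyclic2N].
Qed.

Lemma pi_arrow_comp_from_D_eq0 a c : s a = d -> s c = t a -> pi (ap c * ap a) = 0.
Proof.
move=> ad ca; apply: NNPP => ca0.
have [lenP _] := Dd.
apply: (length2_no_chain3 lenP (cyclicN_submod (pi (ap c * ap a)))
  (cyclicN_submod (pi (ap a)))).
- by move=> _ [x ->]; exists (x * pi (ap c)); rewrite rmorphM mulrA.
- by rewrite -ad; apply: cyclicN_arrow_Pmod.
- by exists (pi (ap c * ap a)); split; [exists 1; rewrite mul1r|].
- exists (pi (ap a)); split; first by exists 1; rewrite mul1r.
  apply: (pi_arrow_notin_cyclicN (Q := long_path 2)) => // x.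
  have [_ _ IL _] := long_path_ideal pathA 2; apply: IL.
  apply: (pspan_mul pathA (Q1 := eq^~ (arrowp s t a)) (Q2 := eq^~ (arrowp s t c))).
  + by move=> p q pq pa qc; rewrite /long_path /= size_cat pa qc.
  + exact: pspan_basis.
  + exact: pspan_basis.
- by exists (ehat d); split; [apply: Pmod_ehat|apply: ehat_notin_cyclicN].
Qed.

End LengthTwo.

Section SocleOfPd.
Variables (d : V) (al : E).
Hypotheses (Dd : inD ehat d) (al_d : s al = d) (al_uniq : forall a, s a = d -> a = al).

Local Notation pa := (pi (ap al)).
Local Notation w := (t al).

Lemma pi_b_al_cons_eq0 (p : path) a l : (val p).2 = al :: a :: l -> pi (b p) = 0.
Proof.
move=> pal; rewrite (b_cons pathA pal); set p' := exist _ _ _.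
have p'al : (val p').2 = a :: l by [].
rewrite (b_cons pathA p'al) -mulrA rmorphM (pi_arrow_comp_from_D_eq0 Dd al_d) ?mulr0 //.
exact: (qhead_start p'al).
Qed.

Lemma pspan_starts_with_al y : pspan b (starts_with al) y -> exists c, pi y = kact c * pa.
Proof.
apply: (pspan_ind (G := fun y => exists c, pi y = kact c * pa)).
- by exists 0; rewrite !rmorph0 mul0r.
- by move=> y1 y2 [c1 y1E] [c2 y2E]; exists (c1 + c2); rewrite !rmorphD y1E y2E mulrDl.
move=> c p [[|a l] pal].
  have -> : p = arrowp s t al.
    by apply/val_inj; rewrite /= -pal (qhead_start pal) -surjective_pairing.
  by exists c; rewrite pi_scaler.
by exists 0; rewrite pi_scaler (pi_b_al_cons_eq0 pal) rmorph0 !mul0r mulr0.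
Qed.

Lemma mulr_pa x : exists c, x * pa = kact c * pa.
Proof.
by have [x' <-] := pi_surj x; rewrite -rmorphM; apply/pspan_starts_with_al/pspan_starts_with.
Qed.

Lemma Pmod_D_decomp u : Pmod ehat d u -> exists c c', u = kact c * ehat d + kact c' * pa.
Proof.
move=> /Pmod_decomp[c [r [-> nr]]]; have [|c' ->] := pspan_starts_with_al (y := r).
  apply: pspan_sub nr => p [pd]; case pl: (val p).2 => [|a l] // _; exists l.
  by rewrite pl (al_uniq (a := a)) // -pd (qhead_start pl).
by exists c, c'.
Qed.

Lemma pa_sq : pa * pa = 0.
Proof.
rewrite -rmorphM; have [loop|Nloop] := eqVneq (s al) (t al).
  exact: (pi_arrow_comp_from_D_eq0 Dd al_d).
by rewrite b_arrow_loopN_eq0 ?rmorph0.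
Qed.

Lemma pa_ehat : pa * ehat d = pa.
Proof. by rewrite -al_d pi_arrow_ehat. Qed.

Lemma cyclicN_pa_simple : simpleN (cyclicN pa).
Proof.
split; first exact: cyclicN_submod.
  by exists pa; split; [exists 1; rewrite mul1r|apply: pi_arrow_neq0].
move=> L sL Lsub; case: (classic (zeroN L)) => [|NL0]; [by left|right].
have [v vNP] := not_all_ex_not _ (fun u => L u -> u = 0) NL0.
have [Lv vN0] := imply_to_and _ _ vNP.
have [x vE] := Lsub v Lv; have [c xc] := mulr_pa x; rewrite xc in vE.
have c0 : c != 0 by apply/eqP => c0; apply: vN0; rewrite vE c0 rmorph0 mul0r.
have Lpa : L pa by rewrite -(kactK pa c0) -vE; apply: submodNZ.
by move=> _ [y ->]; apply: submodNZ.
Qed.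

(* A simple submodule of [P_d] avoiding [Sig * pa] would contain both
   [pa * v = c pa] and then [e_d]. *)
Lemma simple_sub_Pmod_D (L : Sig^o -> Prop) : simpleN L -> (forall u, L u -> Pmod ehat d u) ->
  forall u, L u -> cyclicN pa u.
Proof.
move=> [sL _ Lmin] LP v Lv; apply: NNPP => paNv.
have [c [c' vE]] := Pmod_D_decomp (LP _ Lv).
have c0 : c != 0.
  by apply/eqP => c0; apply: paNv; exists (kact c'); rewrite vE c0 rmorph0 mul0r add0r.
have Lpa : L pa.
  have -> : pa = kact c^-1 * (pa * v).
    by rewrite vE mulrDr !mulrA -!kact_comm -!mulrA pa_ehat pa_sq mulr0 addr0 kactK.
  by apply: submodNZ => //; apply: submodNZ.
have Le : L (ehat d).
  have -> : ehat d = kact c^-1 * (v - kact c' * pa) by rewrite vE addrK kactK.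
  by apply: submodNZ => //; apply: submodNB => //; apply: submodNZ.
have paL u : cyclicN pa u -> L u by move=> [x ->]; apply: submodNZ.
have [pa0|/(_ _ Le)] := Lmin _ (cyclicN_submod pa) paL; last exact: ehat_notin_cyclicN.
by apply: (@pi_arrow_neq0 al); apply: pa0; exists 1; rewrite mul1r.
Qed.

Lemma socN_Pmod_D u : socN (Pmod ehat d) u <-> cyclicN pa u.
Proof.
split=> [[us [-> simple_us]]|pau].
  elim: us simple_us => [|x us IH] simple_us; first by rewrite big_nil; exists 0; rewrite mul0r.
  rewrite big_cons; apply: submodND; first exact: cyclicN_submod.
    by have [L [sL LP Lx]] := simple_us x (mem_head _ _); apply: simple_sub_Pmod_D sL LP _ Lx.
  by apply: IH => y usy; apply: simple_us; rewrite inE usy orbT.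
exists [:: u]; split; first by rewrite big_seq1.
move=> x /[1!inE] /eqP ->; exists (cyclicN pa); split=> //; first exact: cyclicN_pa_simple.
by rewrite -al_d; apply: cyclicN_arrow_Pmod.
Qed.

Lemma top_iso_soc_uniq y : top_iso_soc ehat y d -> y = w.
Proof.
move=> [f [flin fsoc fsurj fker]]; apply: NNPP => /eqP yNw.
have P0 : Pmod ehat y 0 by exists 0; rewrite mul0r.
have f0 : f 0 = 0.
  have := flin 1 0 0 P0 P0; rewrite scaler0 addr0 scale1r => /esym/eqP.
  by rewrite -subr_eq0 addrK => /eqP.
have fM u : Pmod ehat y u -> forall a, f (a * u) = a * f u.
  by move=> Pu a; have := flin a u 0 Pu P0; rewrite !addr0 f0 addr0.
have fe : f (ehat y) = 0.
  have [x fex] := (socN_Pmod_D _).1 (fsoc _ (Pmod_ehat y)); have [c xc] := mulr_pa x.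
  rewrite -ehat_idem (fM _ (Pmod_ehat y)) fex xc mulrA -kact_comm -mulrA.
  by rewrite ehat_pi_arrow_eq0 ?mulr0.
have [u [[a ->] fu]] := fsurj pa ((socN_Pmod_D pa).2 (ex_intro _ 1 (esym (mul1r _)))).
by apply: (@pi_arrow_neq0 al); rewrite -fu (fM _ (Pmod_ehat y)) fe mulr0.
Qed.

(* [l = e_w - r] with [r] in the image of the arrow ideal, hence nilpotent, so
   [e_w] is a left multiple of [l]. *)
Lemma ehat_in_submod (L : Sig^o -> Prop) l :
  submodN L -> L l -> Pmod ehat w l -> l * pa = pa -> L (ehat w).
Proof.
move=> sL Ll Pl lpa; have [c [r [lE nr]]] := Pmod_decomp Pl.
have rpa : pi r * pa = 0.
  rewrite -rmorphM; apply: (pi_pspan_eq0 (Q := fun p => exists a l, (val p).2 = al :: a :: l)).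
    by move=> p [a [l' pal]]; apply: pi_b_al_cons_eq0 pal.
  apply: (pspan_mul pathA (Q1 := eq^~ (arrowp s t al)) (Q2 := nontriv_from w)) => //.
  - move=> p q pq pal [_]; rewrite /= pal /=.
    by case: (val q).2 => [|a l'] // _; exists a, l'.
  - exact: pspan_basis.
have c1 : c = 1.
  apply: (kact_fix_eq1 (@pi_arrow_neq0 al)).
  by rewrite -{2}lpa lE mulrDl rpa addr0 -mulrA ehat_pi_arrow.
rewrite c1 rmorph1 mul1r in lE.
have rw : - pi r * ehat w = - pi r.
  by move/PmodP: Pl; rewrite lE mulrDl ehat_idem => /addrI; rewrite mulNr => ->.
have nilp : (- pi r) ^+ m = 0.
  rewrite -rmorphN -rmorphXn; apply/ker_pi; apply: powJ_sigma; apply: ideal_pow_exp.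
  rewrite -mulN1r; have [_ _ JL _] := gen_idealP (fun y => exists a : E, y = ap a).
  by apply: JL; apply: (arrow_ideal_pspan pathA (Q := nontriv_from w)) nr => p [].
have := sum_expr_mul_subr m.-1 rw; rewrite prednK // nilp subr0 opprK -lE => <-.
exact: submodNZ.
Qed.

Definition annN (u : Sig^o) := Pmod ehat w u /\ u * pa = 0.

Lemma annN_cover : coverN annN (Pmod ehat w).
Proof.
have sP := Pmod_submod w.
split=> //.
- split; first by split; [apply: submodN0|rewrite mul0r].
  move=> a u v [Pu upa] [Pv vpa]; split; first by case: sP => _; apply.
  by rewrite /GRing.scale /= mulrDl -mulrA upa vpa mulr0 addr0.
- by move=> u [].
- exists (ehat w); split; first exact: Pmod_ehat.
  by rewrite /annN ehat_pi_arrow => -[_]; apply: pi_arrow_neq0.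
move=> K sK annK KP; case: (classic (forall u, K u -> annN u)) => [|NKann]; [by left|right].
have [v vNP] := not_all_ex_not _ (fun u => K u -> annN u) NKann.
have [Kv annNv] := imply_to_and _ _ vNP.
have [c vc] := mulr_pa v.
have c0 : c != 0 by apply/eqP => c0; apply: annNv; split; [apply: KP|rewrite vc c0 rmorph0 mul0r].
have Kw : K (ehat w - kact c^-1 * v).
  apply: annK; split.
    by apply: (submodNB sP); [apply: Pmod_ehat|apply: (submodNZ _ sP); apply: KP].
  by rewrite mulrBl ehat_pi_arrow -mulrA vc kactK // subrr.
have Ke : K (ehat w).
  by rewrite -(subrK (kact c^-1 * v) (ehat w)); apply: (submodND sK) => //; apply: submodNZ.
by move=> _ [a ->]; apply: submodNZ.
Qed.

(* Right multiplication by [pa] maps [P_w] onto the socle [Sig * pa] of [P_d];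
   its kernel is the annihilator of [pa], which is the radical. *)
Lemma top_iso_soc_target : top_iso_soc ehat w d.
Proof.
exists (fun u : Sig^o => (u * pa : Sig^o)); split.
- by move=> a u v _ _; rewrite /GRing.scale /= mulrDl mulrA.
- by move=> _ [x ->]; apply/socN_Pmod_D; exists x; rewrite -mulrA ehat_pi_arrow.
- move=> _ /socN_Pmod_D[x ->]; exists (x * ehat w); split; first by exists x.
  by rewrite -mulrA ehat_pi_arrow.
move=> u Pu; split=> [upa|[_ /(_ _ annN_cover) []//]].
split=> // L coverL; have [sL _ LP [v [Pv LNv]] _] := coverL.
have uP z : cyclicN u z -> Pmod ehat w z by move=> [x ->]; apply: (submodNZ _ (Pmod_submod w)).
have [uL|PLu] := cover_addN coverL (cyclicN_submod u) uP.
  by apply: uL; exists 1; rewrite mul1r.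
have [_ [l [[x ->] Ll ewE]]] := PLu _ (Pmod_ehat w).
have lpa : l * pa = pa.
  by rewrite -[l](addKr (x * u)) -ewE mulrDl mulNr -mulrA upa mulr0 oppr0 add0r ehat_pi_arrow.
by case: LNv; have [a ->] := Pv; apply: submodNZ => //; apply: (ehat_in_submod sL Ll (LP _ Ll) lpa).
Qed.

End SocleOfPd.

Lemma arrow_from_D_spec d : inD ehat d ->
  exists al, [/\ s al = d, (forall a, s a = d -> a = al), rho ehat d = t al &
    forall beta, s beta = rho ehat d -> pi (ap beta * ap al) = 0].
Proof.
move=> Dd; have [al al_d] := exists_arrow_from_D Dd.
have al_uniq a : s a = d -> a = al by move/(arrow_from_D_uniq Dd); apply.
have rhoE : rho ehat d = t al.
  apply: (top_iso_soc_uniq Dd al_d al_uniq).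
  apply: (epsilon_spec (inhabits d) (fun y => top_iso_soc ehat y d)).
  by exists (t al); apply: top_iso_soc_target.
exists al; split=> // beta; rewrite rhoE.
exact: (pi_arrow_comp_from_D_eq0 Dd al_d).
Qed.

End BoundQuotient.

Theorem lemma3p3
  (k : fieldType) (V E : finType) (s t : E -> V)
  (A : algType k) (b : qpath s t -> A)
  (sigma : A -> Prop) (m : nat)
  (Sig : nzRingType) (pi : {rmorphism A -> Sig}) :
  is_path_algebra b ->
  (0 < m)%N ->
  (forall x, ideal_pow (gen_ideal (fun y => exists a : E, y = b (arrowp s t a))) m x ->
             gen_ideal sigma x) ->
  (forall x, gen_ideal sigma x ->
             ideal_pow (gen_ideal (fun y => exists a : E, y = b (arrowp s t a))) 2 x) ->
  (forall y : Sig, exists x : A, pi x = y) ->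
  (forall x : A, pi x = 0 <-> gen_ideal sigma x) ->
  condF Sig ->
  let e := fun z : V => pi (b (etriv s t z)) in
  forall d : V, inD e d ->
    exists alpha : E,
      [/\ s alpha = d, (forall a : E, s a = d -> a = alpha),
          t alpha = rho e d &
          forall beta : E, s beta = rho e d ->
            gen_ideal sigma (b (arrowp s t beta) * b (arrowp s t alpha))].
Proof.
move=> pathA m_gt0 powJ_sigma sigma_powJ2 pi_surj ker_pi _ e d Dd.
have [al [al_d al_uniq rhoE comp0]] :=
  arrow_from_D_spec pathA m_gt0 powJ_sigma sigma_powJ2 pi_surj ker_pi Dd.
by exists al; split=> // beta /comp0 /ker_pi.
Qed.
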